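(* Let $k$ be an algebraically closed field of characteristic $2$, $g = x^2+y^2z+yz^2+xyz$, $m\ge 5$, $R_m = k[x_0,\dots,x_m,y_0,\dots,y_m,z_0,\dots,z_m]$, $(\mathbb{A}^3)_m=\mathrm{Spec}\,R_m$, and define $g^{(j)}\in R_m$ by $g(\sum_{i=0}^m x_it^i,\sum_{i=0}^m y_it^i,\sum_{i=0}^m z_it^i)=\sum_{j=0}^m g^{(j)}t^j$ in $R_m[t]/\langle t^{m+1}\rangle$. Define $I_m^0 = \langle x_0,x_1,x_2,y_0,y_1,z_0,z_1\rangle + \langle g^{(0)},\dots,g^{(m)}\rangle$, $I_m^1 = J_m^1 (R_m)_{z_1}\cap R_m$, $I_m^2 = J_m^2 (R_m)_{y_1}\cap R_m$, $I_m^3 = J_m^3 (R_m)_{y_1}\cap R_m$, where $J_m^1 = \langle x_0,x_1,y_0,y_1,z_0\rangle + \langle g^{(0)},\dots,g^{(m)}\rangle$, $J_m^2 = \langle x_0,x_1,y_0,z_0,z_1\rangle + \langle g^{(0)},\dots,g^{(m)}\rangle$, $J_m^3 = \langle x_0,x_1,y_0,z_0,y_1+z_1\rangle + \langle g^{(0)},\dots,g^{(m)}\rangle$, and let $Z_m^i=\mathbf{V}(I_m^i)$ for $i=0,1,2,3$. Let $\psi_1,\psi_2$ be the automorphisms of $(\mathbb{A}^3)_m$ corresponding to the $k$-algebra automorphisms $\varphi_1,\varphi_2$ of $R_m$ given by $\varphi_1: x_i\mapsto x_i,\ y_i\mapsto z_i,\ z_i\mapsto y_i$ and $\varphi_2: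 x_i\mapsto x_i,\ y_i\mapsto y_i,\ z_i\mapsto x_i+y_i+z_i$ (for all $i$). Then (1) $\psi_1(Z_m^0)=Z_m^0$, $\psi_1(Z_m^1)=Z_m^2$, $\psi_1(Z_m^2)=Z_m^1$, $\psi_1(Z_m^3)=Z_m^3$; (2) $\psi_2(Z_m^0)=Z_m^0$, $\psi_2(Z_m^1)=Z_m^1$, $\psi_2(Z_m^2)=Z_m^3$, $\psi_2(Z_m^3)=Z_m^2$.
   Context: $(R_m)_h$ is the localization at powers of $h$, $J(R_m)_h\cap R_m$ the preimage in $R_m$ of the extended ideal, and $\mathbf{V}(\cdot)$ the zero set in $(\mathbb{A}^3)_m$. *)

From HB Require Import structures.
From mathcomp Require Import all_boot all_order all_algebra.
From mathcomp Require Import mpoly.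
Set Implicit Arguments. Unset Strict Implicit. Unset Printing Implicit Defensive.
Import Order.TTheory GRing.Theory.
Local Open Scope ring_scope.

Section Jets.
Variables (k : fieldType) (m : nat).

(* R_m = k[x_0..x_m, y_0..y_m, z_0..z_m]; variable number
   j < 3(m+1) is x_j if j < m+1, y_(j-(m+1)) if m+1 <= j < 2(m+1),
   z_(j-2(m+1)) otherwise. *)
Definition nv := (3 * m.+1)%N.
Definition Rm := {mpoly k[nv]}.

Definition xv (i : nat) : Rm := 'X_(inord i).
Definition yv (i : nat) : Rm := 'X_(inord (m.+1 + i)).
Definition zv (i : nat) : Rm := 'X_(inord (2 * m.+1 + i)).

Definition vblock (j : 'I_nv) : nat := (j %/ m.+1)%N.
Definition vpos (j : 'I_nv) : nat := (j %% m.+1)%N.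

Definition arcx : {poly Rm} := \sum_(i < m.+1) (xv i)%:P * 'X^i.
Definition arcy : {poly Rm} := \sum_(i < m.+1) (yv i)%:P * 'X^i.
Definition arcz : {poly Rm} := \sum_(i < m.+1) (zv i)%:P * 'X^i.

(* g = x^2 + y^2 z + y z^2 + x y z evaluated on the arcs; g^(j) is the
   coefficient of t^j (for j <= m this is the same in R_m[t]/<t^(m+1)>). *)
Definition garc : {poly Rm} :=
  arcx ^+ 2 + arcy ^+ 2 * arcz + arcy * arcz ^+ 2 + arcx * arcy * arcz.
Definition gj (j : nat) : Rm := garc`_j.
Definition gjs : seq Rm := [seq gj j | j <- iota 0 m.+1].

Definition in_ideal (gs : seq Rm) (f : Rm) : Prop :=
  exists c : 'I_(size gs) -> Rm, f = \sum_(i < size gs) c i * gs`_i.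

(* J R_h ∩ R : f/1 ∈ J R_h  iff  h^n f ∈ J for some n *)
Definition in_sat (gs : seq Rm) (h : Rm) (f : Rm) : Prop :=
  exists n : nat, in_ideal gs (h ^+ n * f).

Definition I0 : Rm -> Prop :=
  in_ideal ([:: xv 0; xv 1; xv 2; yv 0; yv 1; zv 0; zv 1] ++ gjs).
Definition J1 : seq Rm := [:: xv 0; xv 1; yv 0; yv 1; zv 0] ++ gjs.
Definition J2 : seq Rm := [:: xv 0; xv 1; yv 0; zv 0; zv 1] ++ gjs.
Definition J3 : seq Rm := [:: xv 0; xv 1; yv 0; zv 0; yv 1 + zv 1] ++ gjs.
Definition I1 : Rm -> Prop := in_sat J1 (zv 1).
Definition I2 : Rm -> Prop := in_sat J2 (yv 1).
Definition I3 : Rm -> Prop := in_sat J3 (yv 1).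

(* (k-rational = closed) points of (A^3)_m = Spec R_m *)
Definition point := 'I_nv -> k.
Definition Vset (I : Rm -> Prop) : point -> Prop :=
  fun p => forall f, I f -> f.@[p] = 0.

Definition Z0 := Vset I0.
Definition Z1 := Vset I1.
Definition Z2 := Vset I2.
Definition Z3 := Vset I3.

Definition alg_map (img : 'I_nv -> Rm) (f : Rm) : Rm :=
  f \mPo [tuple img j | j < nv].

Definition phi1_img (j : 'I_nv) : Rm :=
  match vblock j with
  | 0%N => 'X_j
  | 1%N => zv (vpos j)
  | _ => yv (vpos j)
  end.
Definition phi2_img (j : 'I_nv) : Rm :=
  match vblock j with
  | 0%N | 1%N => 'X_j
  | _ => xv (vpos j) + yv (vpos j) + zv (vpos j)
  end.

Definition phi1 := alg_map phi1_img.
Definition phi2 := alg_map phi2_img.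

(* Spec of an algebra map on closed points: the point p (evaluation
   ev_p : R_m -> k) goes to ev_p \o phi, whose coordinates are
   (phi X_j)(p). *)
Definition spec_map (img : 'I_nv -> Rm) (p : point) : point :=
  fun j => (img j).@[p].

Definition psi1 := spec_map phi1_img.
Definition psi2 := spec_map phi2_img.

End Jets.

Definition image_set (A B : Type) (f : A -> B) (S : A -> Prop) : B -> Prop :=
  fun b => exists2 a, S a & b = f a.
Definition same_set (A : Type) (S T : A -> Prop) : Prop :=
  forall a, S a <-> T a.

From HB Require Import structures.
From mathcomp Require Import all_boot all_order all_algebra.
From mathcomp Require Import mpoly.
From mathcomp Require Import ring.
From Stdlib Require Import FunctionalExtensionality.
Set Implicit Arguments. Unset Strict Implicit. Unset Printing Implicit Defensive.
Import GRing.Theory.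
Local Open Scope ring_scope.

(* Both phi1 and phi2 are involutions (phi2 because x + y + (x + y + z) = z in
   characteristic 2) and both fix g, which is symmetric in y, z and satisfies
   g(x, y, x + y + z) = g(x, y, z) + 2(...). So they fix every g^(j) and, up to
   ideal membership, permute the linear generators of the ideals.  For the
   saturations J R_h ∩ R, the element h is moreover sent to the target h' modulo
   the target ideal, and h^n f ∈ J transports because phi(h) - h' divides
   phi(h)^n - h'^n.  Hence each phi maps I^i into I^j and I^j into I^i, and as
   f(psi p) = (phi f)(p) with psi an involution, psi(V(I^i)) = V(I^j). *)

Section IdealMembership.
Variables (k : fieldType) (m : nat).
Implicit Types (gs hs : seq (Rm k m)) (f h : Rm k m).

Lemma in_ideal0 gs : in_ideal gs 0.
Proof. by exists (fun _ => 0); rewrite big1 // => i _; rewrite mul0r. Qed.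

Lemma in_idealD gs f h : in_ideal gs f -> in_ideal gs h -> in_ideal gs (f + h).
Proof.
move=> [c ->] [d ->]; exists (fun i => c i + d i).
by rewrite -big_split; apply: eq_bigr => i _; rewrite mulrDl.
Qed.

Lemma in_idealMl gs a f : in_ideal gs f -> in_ideal gs (a * f).
Proof.
move=> [c ->]; exists (fun i => a * c i).
by rewrite mulr_sumr; apply: eq_bigr => i _; rewrite mulrA.
Qed.

Lemma in_idealB gs f h : in_ideal gs f -> in_ideal gs h -> in_ideal gs (f - h).
Proof. by move=> If Ih; apply: in_idealD If _; rewrite -mulN1r; apply: in_idealMl. Qed.

Lemma mem_in_ideal gs h : h \in gs -> in_ideal gs h.
Proof.
move=> gs_h; have lt_i0 : (index h gs < size gs)%N by rewrite index_mem.
pose i0 := Ordinal lt_i0.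
exists (fun i => (i == i0)%:R); rewrite (bigD1 i0) //= eqxx mul1r nth_index //.
by rewrite big1 ?addr0 // => i /negPf ->; rewrite mul0r.
Qed.

Definition sub_ideal (hs gs : seq (Rm k m)) : Prop :=
  forall h, h \in hs -> in_ideal gs h.

Lemma sub_ideal_cons h hs gs :
  in_ideal gs h -> sub_ideal hs gs -> sub_ideal (h :: hs) gs.
Proof. by move=> Ih sub h'; rewrite in_cons => /predU1P[-> //|/sub]. Qed.

Lemma in_ideal_rmorph (phi : {rmorphism Rm k m -> Rm k m}) hs gs f :
  sub_ideal (map phi hs) gs -> in_ideal hs f -> in_ideal gs (phi f).
Proof.
move=> sub [c ->]; rewrite rmorph_sum.
apply: (big_ind (in_ideal gs)); [exact: in_ideal0 | exact: in_idealD |].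
move=> i _; rewrite rmorphM; apply/in_idealMl/sub.
by rewrite -(nth_map 0 0) ?mem_nth ?size_map.
Qed.

Lemma in_sat_rmorph (phi : {rmorphism Rm k m -> Rm k m}) hs gs h h' f :
  sub_ideal (map phi hs) gs -> in_ideal gs (phi h - h') ->
  in_sat hs h f -> in_sat gs h' (phi f).
Proof.
move=> sub Ih [n In]; exists n.
have := in_ideal_rmorph sub In; rewrite rmorphM rmorphXn => Ihnf.
have -> : h' ^+ n * phi f = phi h ^+ n * phi f - (phi h ^+ n - h' ^+ n) * phi f.
  by rewrite mulrBl opprB addrC subrK.
apply: in_idealB Ihnf _.
by rewrite subrXX -mulrA mulrC; apply: in_idealMl.
Qed.

End IdealMembership.

Section AlgebraMaps.
Variables (k : fieldType) (m : nat).
Implicit Types (img : 'I_(nv m) -> Rm k m) (p : point k m) (f : Rm k m).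

HB.instance Definition _ (img : 'I_(nv m) -> Rm k m) :=
  GRing.RMorphism.copy (alg_map img) (comp_mpoly [tuple img j | j < nv m]).

Lemma alg_mapX img j : alg_map img 'X_j = img j.
Proof. by rewrite /alg_map comp_mpolyXU -tnth_nth tnth_mktuple. Qed.

Lemma meval_spec_map img p f : f.@[spec_map img p] = (alg_map img f).@[p].
Proof. by rewrite comp_mpoly_meval; apply: meval_eq => j; rewrite tnth_mktuple. Qed.

Lemma spec_mapK img :
  (forall j, alg_map img (alg_map img 'X_j) = 'X_j) -> involutive (spec_map img).
Proof.
move=> imgK p; apply: functional_extensionality => j.
by rewrite {1}/spec_map meval_spec_map -alg_mapX imgK mevalXU.
Qed.

Lemma image_spec_map_Vset img (I I' : Rm k m -> Prop) :
  involutive (spec_map img) ->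
  {homo alg_map img : f / I f >-> I' f} -> {homo alg_map img : f / I' f >-> I f} ->
  same_set (image_set (spec_map img) (Vset I)) (Vset I').
Proof.
move=> psiK II' I'I q; split=> [[p Vp ->] f /I'I /Vp | Vq].
  by rewrite meval_spec_map.
by exists (spec_map img q) => [f /II' /Vq|]; rewrite ?meval_spec_map ?psiK.
Qed.

End AlgebraMaps.

Definition gform (R : comPzRingType) (x y z : R) : R :=
  x ^+ 2 + y ^+ 2 * z + y * z ^+ 2 + x * y * z.

Lemma gformC (R : comPzRingType) (x y z : R) : gform x z y = gform x y z.
Proof. by rewrite /gform; ring. Qed.

Lemma gform_shift (R : comNzRingType) (x y z : R) :
  (2 \in [pchar R])%N -> gform x y (x + y + z) = gform x y z.
Proof.
move=> char2; have two0 : 2%:R = 0 :> R by apply: pcharf0.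
rewrite /gform.
have -> : x ^+ 2 + y ^+ 2 * (x + y + z) + y * (x + y + z) ^+ 2 + x * y * (x + y + z)
  = x ^+ 2 + y ^+ 2 * z + y * z ^+ 2 + x * y * z
    + 2%:R * (y ^+ 3 + x ^+ 2 * y + 2%:R * x * y ^+ 2 + x * y * z + y ^+ 2 * z) by ring.
by rewrite two0 mul0r addr0.
Qed.

Lemma rmorph_gform (R S : comPzRingType) (f : {rmorphism R -> S}) (x y z : R) :
  f (gform x y z) = gform (f x) (f y) (f z).
Proof. by rewrite /gform !rmorphD !rmorphXn !rmorphM. Qed.

Lemma pchar_mpoly (R : nzRingType) n : [pchar {mpoly R[n]}] =i [pchar R].
Proof. by move=> p; rewrite !inE -mpolyC_nat mpolyC_eq0. Qed.

Section Automorphisms.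
Variables (k : fieldType) (m : nat).
Local Notation Rm := (Rm k m).
Local Notation xv := (xv k m).
Local Notation yv := (yv k m).
Local Notation zv := (zv k m).
Local Notation gj := (gj k m).
Local Notation gjs := (gjs k m).

Lemma inord_blockE b i : (b < 3)%N -> (i <= m)%N ->
  vblock (inord (b * m.+1 + i) : 'I_(nv m)) = b
  /\ vpos (inord (b * m.+1 + i) : 'I_(nv m)) = i.
Proof.
move=> lt_b3 le_im; rewrite /vblock /vpos inordK; last first.
  change (b * m.+1 + i < 3 * m.+1)%N.
  have lt_bm : (b * m.+1 + i < b.+1 * m.+1)%N.
    by rewrite mulSn addnC ltn_add2r.
  by apply: leq_trans lt_bm _; rewrite leq_mul2r lt_b3 orbT.
by rewrite divnMDl // modnMDl divn_small ?modn_small ?addn0.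
Qed.

Lemma mpolyX_cases (j : 'I_(nv m)) :
  exists2 i, (i <= m)%N & [\/ 'X_j = xv i, 'X_j = yv i | 'X_j = zv i].
Proof.
have lt_b3 : (vblock j < 3)%N by rewrite /vblock ltn_divLR //; apply: ltn_ord.
have le_pm : (vpos j <= m)%N by rewrite -ltnS ltn_mod.
have -> : j = inord (vblock j * m.+1 + vpos j).
  by apply: val_inj; rewrite /= inordK -?divn_eq.
exists (vpos j) => //; rewrite /xv /yv /zv.
by case: (vblock j) lt_b3 => [|[|[|]]] // _; rewrite ?mul0n ?mul1n; constructor.
Qed.

HB.instance Definition _ := GRing.RMorphism.on (@phi1 k m).
HB.instance Definition _ := GRing.RMorphism.on (@phi2 k m).

Lemma phi1_xv i : (i <= m)%N -> phi1 (xv i) = xv i.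
Proof.
move=> le_im; rewrite /phi1 alg_mapX /phi1_img.
by case: (@inord_blockE 0 i) => // ->.
Qed.

Lemma phi1_yv i : (i <= m)%N -> phi1 (yv i) = zv i.
Proof.
move=> le_im; rewrite /phi1 alg_mapX /phi1_img.
by case: (@inord_blockE 1 i) => //; rewrite mul1n => -> ->.
Qed.

Lemma phi1_zv i : (i <= m)%N -> phi1 (zv i) = yv i.
Proof.
move=> le_im; rewrite /phi1 alg_mapX /phi1_img.
by case: (@inord_blockE 2 i) => // -> ->.
Qed.

Lemma phi2_xv i : (i <= m)%N -> phi2 (xv i) = xv i.
Proof.
move=> le_im; rewrite /phi2 alg_mapX /phi2_img.
by case: (@inord_blockE 0 i) => // ->.
Qed.

Lemma phi2_yv i : (i <= m)%N -> phi2 (yv i) = yv i.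
Proof.
move=> le_im; rewrite /phi2 alg_mapX /phi2_img.
by case: (@inord_blockE 1 i) => //; rewrite mul1n => ->.
Qed.

Lemma phi2_zv i : (i <= m)%N -> phi2 (zv i) = xv i + yv i + zv i.
Proof.
move=> le_im; rewrite /phi2 alg_mapX /phi2_img.
by case: (@inord_blockE 2 i) => // -> ->.
Qed.

Lemma map_poly_arc img (a b : nat -> Rm) :
  (forall i, (i <= m)%N -> alg_map img (a i) = b i) ->
  map_poly (alg_map img) (\sum_(i < m.+1) (a i)%:P * 'X^i)
    = \sum_(i < m.+1) (b i)%:P * 'X^i.
Proof.
move=> img_ab; rewrite rmorph_sum; apply: eq_bigr => i _.
by rewrite rmorphM /= map_polyC map_polyXn -img_ab // -ltnS.
Qed.

Lemma garcE : garc k m = gform (arcx k m) (arcy k m) (arcz k m).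
Proof. by []. Qed.

Lemma gj_fixed img :
  gform (map_poly (alg_map img) (arcx k m)) (map_poly (alg_map img) (arcy k m))
        (map_poly (alg_map img) (arcz k m)) = garc k m ->
  forall j, alg_map img (gj j) = gj j.
Proof. by move=> img_g j; rewrite /gj -coef_map -{2}img_g garcE rmorph_gform. Qed.

Lemma sub_ideal_jets (phi : {rmorphism Rm -> Rm}) L L' :
  (forall j, phi (gj j) = gj j) -> sub_ideal (map phi L) (L' ++ gjs) ->
  sub_ideal (map phi (L ++ gjs)) (L' ++ gjs).
Proof.
move=> phi_g subL h; rewrite map_cat /gjs -map_comp (eq_map phi_g) mem_cat.
by case/orP=> [/subL // | gjs_h]; apply: mem_in_ideal; rewrite mem_cat gjs_h orbT.
Qed.

Lemma phi1_gj j : phi1 (gj j) = gj j.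
Proof.
apply: gj_fixed; rewrite garcE -gformC; congr gform; rewrite /arcx /arcy /arcz.
- exact: map_poly_arc phi1_xv.
- exact: map_poly_arc phi1_zv.
- exact: map_poly_arc phi1_yv.
Qed.

Lemma psi1K : involutive (@psi1 k m).
Proof.
apply: spec_mapK => j; rewrite -/(@phi1 k m).
have [i le_im [] ->] := mpolyX_cases j.
- by rewrite !phi1_xv.
- by rewrite phi1_yv ?phi1_zv.
- by rewrite phi1_zv ?phi1_yv.
Qed.

Hypothesis char2 : (2 \in [pchar k])%N.

Fact pchar2_Rm : (2 \in [pchar Rm])%N.
Proof. by rewrite pchar_mpoly. Qed.

Lemma phi2_gj j : phi2 (gj j) = gj j.
Proof.
have char2_poly : (2 \in [pchar {poly Rm}])%N by rewrite pchar_poly pchar2_Rm.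
apply: gj_fixed; rewrite garcE -[gform (arcx k m) _ _](gform_shift _ _ _ char2_poly).
congr gform; rewrite /arcx /arcy /arcz.
- exact: map_poly_arc phi2_xv.
- exact: map_poly_arc phi2_yv.
rewrite (map_poly_arc phi2_zv) -!big_split.
by apply: eq_bigr => i _; rewrite !polyCD !mulrDl.
Qed.

Lemma psi2K : involutive (@psi2 k m).
Proof.
apply: spec_mapK => j; rewrite -/(@phi2 k m).
have [i le_im [] ->] := mpolyX_cases j.
- by rewrite !phi2_xv.
- by rewrite !phi2_yv.
rewrite phi2_zv // !rmorphD /= phi2_zv // phi2_yv // phi2_xv // addrA.
by rewrite (addrr_pchar2 pchar2_Rm) add0r.
Qed.

Hypothesis m_ge2 : (2 <= m)%N.

(* Together with [m_ge2], lets [//] close the side conditions [i <= m] for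
   the indices [i <= 2] occurring in the generators. *)
Let m_gt0 : (0 < m)%N := ltnW m_ge2.

Ltac ideal_generator :=
  apply: mem_in_ideal; by rewrite mem_cat !in_cons eqxx ?orbA ?orbT.

Ltac ideal_sum := first [ideal_generator | apply: in_idealD; ideal_sum].

Lemma phi1_I0 : {homo @phi1 k m : f / I0 f}.
Proof.
move=> f; apply: in_ideal_rmorph; apply: sub_ideal_jets phi1_gj _.
(* [xv (m.+1 + i)] is convertible to [yv i]: the [xv] rules must come last. *)
rewrite [map _ _]/= -/(@phi1 k m) !phi1_zv // !phi1_yv // !phi1_xv //.
by do !(apply: sub_ideal_cons; first by ideal_sum).
Qed.

Lemma phi1_I1_I2 : {homo @phi1 k m : f / I1 f >-> I2 f}.
Proof.
move=> f; apply: in_sat_rmorph; last by rewrite /= phi1_zv // subrr; apply: in_ideal0.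
apply: sub_ideal_jets phi1_gj _.
rewrite [map _ _]/= -/(@phi1 k m) !phi1_zv // !phi1_yv // !phi1_xv //.
by do !(apply: sub_ideal_cons; first by ideal_sum).
Qed.

Lemma phi1_I2_I1 : {homo @phi1 k m : f / I2 f >-> I1 f}.
Proof.
move=> f; apply: in_sat_rmorph; last by rewrite /= phi1_yv // subrr; apply: in_ideal0.
apply: sub_ideal_jets phi1_gj _.
rewrite [map _ _]/= -/(@phi1 k m) !phi1_zv // !phi1_yv // !phi1_xv //.
by do !(apply: sub_ideal_cons; first by ideal_sum).
Qed.

Lemma phi1_I3 : {homo @phi1 k m : f / I3 f}.
Proof.
move=> f; apply: in_sat_rmorph; last first.
  by rewrite /= phi1_yv // (oppr_pchar2 pchar2_Rm) addrC; ideal_generator.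
apply: sub_ideal_jets phi1_gj _.
rewrite [map _ _]/= -/(@phi1 k m) !phi1_zv // !phi1_yv // !phi1_xv //.
do 4 (apply: sub_ideal_cons; first by ideal_generator).
apply: sub_ideal_cons => //.
by rewrite rmorphD [X in in_ideal _ X]/= phi1_yv // phi1_zv // addrC; ideal_generator.
Qed.

Lemma phi2_I0 : {homo @phi2 k m : f / I0 f}.
Proof.
move=> f; apply: in_ideal_rmorph; apply: sub_ideal_jets phi2_gj _.
rewrite [map _ _]/= -/(@phi2 k m) !phi2_zv // !phi2_yv // !phi2_xv //.
by do !(apply: sub_ideal_cons; first by ideal_sum).
Qed.

Lemma phi2_I1 : {homo @phi2 k m : f / I1 f}.
Proof.
move=> f; apply: in_sat_rmorph; last by rewrite /= phi2_zv // addrK; ideal_sum.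
apply: sub_ideal_jets phi2_gj _.
rewrite [map _ _]/= -/(@phi2 k m) !phi2_zv // !phi2_yv // !phi2_xv //.
by do !(apply: sub_ideal_cons; first by ideal_sum).
Qed.

Lemma phi2_I2_I3 : {homo @phi2 k m : f / I2 f >-> I3 f}.
Proof.
move=> f; apply: in_sat_rmorph; last by rewrite /= phi2_yv // subrr; apply: in_ideal0.
apply: sub_ideal_jets phi2_gj _.
rewrite [map _ _]/= -/(@phi2 k m) !phi2_zv // !phi2_yv // !phi2_xv // -[xv 1 + _ + _]addrA.
by do !(apply: sub_ideal_cons; first by ideal_sum).
Qed.

Lemma phi2_I3_I2 : {homo @phi2 k m : f / I3 f >-> I2 f}.
Proof.
move=> f; apply: in_sat_rmorph; last by rewrite /= phi2_yv // subrr; apply: in_ideal0.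
apply: sub_ideal_jets phi2_gj _.
rewrite [map _ _]/= -/(@phi2 k m) !phi2_zv // !phi2_yv // !phi2_xv //.
do 4 (apply: sub_ideal_cons; first by ideal_sum).
apply: sub_ideal_cons => //.
rewrite rmorphD [X in in_ideal _ X]/= phi2_yv // phi2_zv //.
have -> : yv 1 + (xv 1 + yv 1 + zv 1) = xv 1 + zv 1 + (yv 1 + yv 1) by ring.
by rewrite (addrr_pchar2 pchar2_Rm) addr0; ideal_sum.
Qed.

End Automorphisms.

Theorem lemma4p11 (k : closedFieldType) (m : nat) :
  (2 \in [pchar k])%N -> (5 <= m)%N ->
  (same_set (image_set (@psi1 k m) (@Z0 k m)) (@Z0 k m)
   /\ same_set (image_set (@psi1 k m) (@Z1 k m)) (@Z2 k m)
   /\ same_set (image_set (@psi1 k m) (@Z2 k m)) (@Z1 k m)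
   /\ same_set (image_set (@psi1 k m) (@Z3 k m)) (@Z3 k m))
  /\
  (same_set (image_set (@psi2 k m) (@Z0 k m)) (@Z0 k m)
   /\ same_set (image_set (@psi2 k m) (@Z1 k m)) (@Z1 k m)
   /\ same_set (image_set (@psi2 k m) (@Z2 k m)) (@Z3 k m)
   /\ same_set (image_set (@psi2 k m) (@Z3 k m)) (@Z2 k m)).
Proof.
move=> char2 m_ge5; have m_ge2 : (2 <= m)%N by apply: leq_trans m_ge5.
have psi1K := @psi1K k m; have psi2K := @psi2K k m char2.
split; (split; [|split; [|split]]).
- exact: image_spec_map_Vset psi1K (phi1_I0 m_ge2) (phi1_I0 m_ge2).
- exact: image_spec_map_Vset psi1K (phi1_I1_I2 m_ge2) (phi1_I2_I1 m_ge2).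
- exact: image_spec_map_Vset psi1K (phi1_I2_I1 m_ge2) (phi1_I1_I2 m_ge2).
- exact: image_spec_map_Vset psi1K (phi1_I3 char2 m_ge2) (phi1_I3 char2 m_ge2).
- exact: image_spec_map_Vset psi2K (phi2_I0 char2 m_ge2) (phi2_I0 char2 m_ge2).
- exact: image_spec_map_Vset psi2K (phi2_I1 char2 m_ge2) (phi2_I1 char2 m_ge2).
- exact: image_spec_map_Vset psi2K (phi2_I2_I3 char2 m_ge2) (phi2_I3_I2 char2 m_ge2).
- exact: image_spec_map_Vset psi2K (phi2_I3_I2 char2 m_ge2) (phi2_I2_I3 char2 m_ge2).
Qed.
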